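(* Denote $\left\|G_m\right\|_{\mathcal{H}_2}^2$ as $f(s_1,s_2)$. Then \begin{equation*} f(s_1,s_2)=2(s_1+s_2)\, C \mathcal{A}_2^{-1}\left(s_1s_2 \mathbf{B}+ A \mathbf{B} A^T\right) \mathcal{A}_2^{-T} C^T, \end{equation*} where $\mathcal{A}_2=\left(s_1 I-A\right)\left(s_2 I-A\right)$ and $\mathbf{B}=B B^T$.
   Context: Let $G(s)=C(sI-A)^{-1}B$ be a stable SISO continuous-time LTI system of order $n$, with $A\in\mathbb{R}^{n\times n}$, $B\in\mathbb{R}^{n\times 1}$, $C\in\mathbb{R}^{1\times n}$. Consider a stable reduced-order model $G_m(s)=C_m(sI_m-A_m)^{-1}B_m$ of order $m=2$ written in the diagonal form $A_m=\operatorname{diag}(a_1,a_2)$, $B_m=[b_1\ b_2]^T$, $C_m=[1\ 1]$, which satisfies the first-order necessary conditions for $\mathcal{H}_2$ optimality, i.e. with interpolation points $s_i=-a_i$ ($i=1,2$) it interpolates $G$ and $G'$ at $s_1,s_2$: $G_m(s_i)=G(s_i)$, $G_m'(s_i)=G'(s_i)$. The interpolation points are distinct ($s_1\neq s_2$), not eigenvalues of $A$, and either both real ($s_1,s_2\in\mathbb{R}$) or a complex conjugate pair ($s_2=\bar s_1$). Define $g_i=C(s_iI-A)^{-1}B$, $i=1,2$, so that $G_m(s_i)=g_i$. The $\mathcal{H}_2$ norm is $\|G_m\|_{\mathcal{H}_2}^2=C_mP_mC_m^H$, where $P_m$ is the controllability Gramian solving $A_mP_m+P_mA_m^H+B_mB_m^H=0$.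 *)

From HB Require Import structures.
From mathcomp Require Import all_boot all_order all_algebra.
From mathcomp Require Import all_classical all_reals all_analysis.
From mathcomp Require Import complex.
Set Implicit Arguments. Unset Strict Implicit. Unset Printing Implicit Defensive.
Import Order.TTheory GRing.Theory Num.Theory.
Import numFieldNormedType.Exports.
Local Open Scope ring_scope.

Definition cmx (R : realType) (m n : nat) (M : 'M[R]_(m, n)) : 'M[R[i]]_(m, n) :=
  map_mx (real_complex R) M.

Definition ctrmx (R : realType) (m n : nat) (M : 'M[R[i]]_(m, n)) : 'M[R[i]]_(n, m) :=
  (map_mx Num.conj M)^T.

Definition tf (R : realType) (n : nat) (A : 'M[R[i]]_n) (B : 'cV[R[i]]_n)
  (C : 'rV[R[i]]_n) (s : R[i]) : R[i] :=
  (C *m invmx (s%:M - A) *m B) 0 0.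

Definition hurwitz (R : realType) (n : nat) (A : 'M[R[i]]_n) : Prop :=
  forall l : R[i], eigenvalue A l -> complex.Re l < 0.

(* Complex derivative f'(s) of f : C -> C (C viewed as a normed module over
   itself, with the modulus as norm); this is MathComp-Analysis' derive1. *)
Definition cderive (R : realType) (f : R[i] -> R[i]) : R[i] -> R[i] :=
  derive1 (V := (R[i])^o) f.

From HB Require Import structures.
From mathcomp Require Import all_boot all_order all_algebra.
From mathcomp Require Import all_classical all_reals all_analysis.
From mathcomp Require Import complex.
From mathcomp Require Import ring.
Set Implicit Arguments. Unset Strict Implicit. Unset Printing Implicit Defensive.
Import Order.TTheory GRing.Theory Num.Theory.
Import numFieldNormedType.Exports.
Local Open Scope ring_scope.

(* With a_i = -s_i the reduced model is G_m(s) = b1/(s+s1) + b2/(s+s2), and the diagonal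
   Lyapunov equation gives P_ij = b_i conj(b_j) / (s_i + conj(s_j)).  The residues are the
   unique solution of the nonsingular 2x2 Cauchy system G_m(s_k) = g_k; since G is real,
   (conj b_i) solves the conjugated system, so conjugation permutes the pairs (s_i, b_i).
   Hence ||G_m||^2 = sum_ij b_i b_j / (s_i + s_j) = b1 g1 + b2 g2.  On the other side the
   resolvent identity gives C A2^-1 B = (g2 - g1) / (s1 - s2) =: u and C A2^-1 A B = s1 u - g2,
   so the right-hand side is 2 (s1 + s2) (s1 s2 u^2 + (s1 u - g2)^2), and both sides are
   the same rational function of s1, s2, b1, b2. *)

Section PoleResidue.
Variable F : fieldType.

Definition pole_residue2 (s1 s2 b1 b2 s : F) := b1 / (s + s1) + b2 / (s + s2).

Lemma pole_residue2C s1 s2 b1 b2 : pole_residue2 s2 s1 b2 b1 =1 pole_residue2 s1 s2 b1 b2.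
Proof. by move=> s; rewrite /pole_residue2 addrC. Qed.

Variables s1 s2 : F.
Hypotheses (s11 : s1 + s1 != 0) (s12 : s1 + s2 != 0) (s22 : s2 + s2 != 0).
Hypothesis s1_neq_s2 : s1 != s2.

Lemma pole_residue2_interp_inj u1 u2 v1 v2 :
  pole_residue2 s1 s2 u1 u2 s1 = pole_residue2 s1 s2 v1 v2 s1 ->
  pole_residue2 s1 s2 u1 u2 s2 = pole_residue2 s1 s2 v1 v2 s2 ->
  u1 = v1 /\ u2 = v2.
Proof.
(* Cramer's rule for the Cauchy matrix [1 / (s_i + s_j)], whose determinant is a
   multiple of (s1 - s2)^2. *)
move=> e1 e2; have : (u2 - v2) * (s1 - s2) ^+ 2 = (s2 + s2) *
    ((s1 + s2) ^+ 2 * (pole_residue2 s1 s2 u1 u2 s2 - pole_residue2 s1 s2 v1 v2 s2)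
     - (s1 + s1) * (s1 + s2) * (pole_residue2 s1 s2 u1 u2 s1 - pole_residue2 s1 s2 v1 v2 s1)).
  by rewrite /pole_residue2; field; rewrite s12 s11 s22.
rewrite e1 e2 !subrr !mulr0 subrr mulr0 => /eqP.
rewrite mulf_eq0 expf_eq0 !subr_eq0 (negbTE s1_neq_s2) andbF orbF => /eqP u2v2.
split=> //; move: e1; rewrite /pole_residue2 u2v2 => /addIr.
exact/mulIf/invr_neq0.
Qed.

Lemma pole_residue2_h2_identity b1 b2 :
  let g1 := pole_residue2 s1 s2 b1 b2 s1 in
  let g2 := pole_residue2 s1 s2 b1 b2 s2 in
  let u := (g2 - g1) / (s1 - s2) in
  b1 * g1 + b2 * g2 = 2 * (s1 + s2) * (s1 * s2 * u ^+ 2 + (s1 * u - g2) ^+ 2).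
Proof.
have s21 : s2 + s1 != 0 by rewrite addrC.
have d12 : s1 - s2 != 0 by rewrite subr_eq0.
by rewrite /pole_residue2 /=; field; rewrite s11 s21 s22 d12.
Qed.

End PoleResidue.

Lemma rmorph_pole_residue2 (F K : fieldType) (f : {rmorphism F -> K}) s1 s2 b1 b2 s :
  f (pole_residue2 s1 s2 b1 b2 s) = pole_residue2 (f s1) (f s2) (f b1) (f b2) (f s).
Proof. by rewrite /pole_residue2 rmorphD !fmorph_div !rmorphD. Qed.

Lemma invmxM (R : comUnitRingType) n (A B : 'M[R]_n) :
  A \in unitmx -> B \in unitmx -> invmx (A *m B) = invmx B *m invmx A.
Proof.
move=> uA uB; have uAB : A *m B \in unitmx by rewrite unitmx_mul uA uB.
by rewrite -[RHS]mulmx1 -(mulmxV uAB) -!mulmxA !mulKmx.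
Qed.

Lemma resolvent_identity (F : fieldType) n (A : 'M[F]_n) s1 s2 :
  s1%:M - A \in unitmx -> s2%:M - A \in unitmx ->
  (s1 - s2) *: (invmx (s2%:M - A) *m invmx (s1%:M - A))
    = invmx (s2%:M - A) - invmx (s1%:M - A).
Proof.
move=> u1 u2; have scalarE : (s1 - s2)%:M = (s1%:M - A) - (s2%:M - A).
  by rewrite opprB addrA subrK raddfB.
rewrite scalemxAr -mul_scalar_mx scalarE mulmxBl mulmxV // mulmxBr mulmx1.
by rewrite mulmxA mulVmx // mul1mx.
Qed.

Lemma invmx_diag (F : fieldType) n (d : 'rV[F]_n) :
  (forall i, d 0 i != 0) -> invmx (diag_mx d) = diag_mx (map_mx GRing.inv d).
Proof.
move=> d_neq0; have dK : diag_mx d *m diag_mx (map_mx GRing.inv d) = 1%:M.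
  by rewrite mulmx_diag -diag_const_mx; congr diag_mx; apply/rowP => i; rewrite !mxE mulfV.
have [dU _] := mulmx1_unit dK.
by rewrite -[LHS]mulmx1 -dK mulKmx.
Qed.

Lemma eigenvalue_diag (F : fieldType) n (d : 'rV[F]_n) i : eigenvalue (diag_mx d) (d 0 i).
Proof.
apply/eigenvalueP; exists (delta_mx 0 i).
  apply/matrixP => p q; rewrite mul_mx_diag !mxE.
  by rewrite (ord1 p) eqxx; case: eqP => [->|_]; rewrite ?mulr0n ?mul0r ?mulr0 // mulrC.
by apply/eqP => /matrixP /(_ 0 i); rewrite !mxE !eqxx => /eqP; rewrite oner_eq0.
Qed.

Lemma unitmx_sub_scalar (F : fieldType) n (A : 'M[F]_n) s :
  ~ eigenvalue A s -> s%:M - A \in unitmx.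
Proof.
move=> not_eig; have : kermx (A - s%:M) == 0.
  by apply/negPn/negP; exact: not_eig.
by rewrite kermx_eq0 row_free_unit -opprB -scaleN1r unitmxZ // unitrN1.
Qed.

Section ComplexSystems.
Variable R : realType.
Implicit Types x y s : R[i].

Lemma complexReN x : complex.Re (- x) = - complex.Re x.
Proof. by case: x. Qed.

Lemma complexRe_conj x : complex.Re x^* = complex.Re x.
Proof. by case: x. Qed.

Lemma complexRe_gt0_addr_neq0 x y : 0 < complex.Re x -> 0 < complex.Re y -> x + y != 0.
Proof.
case: x y => a b [c d] /= a_gt0 c_gt0.
by apply/eqP => -[ac0 _]; move: (addr_gt0 a_gt0 c_gt0); rewrite ac0 ltxx.
Qed.

Lemma conj_cmx m n (M : 'M[R]_(m, n)) : map_mx Num.conj (cmx M) = cmx M.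
Proof.
apply/matrixP => i j; rewrite !mxE conj_Creal //.
by apply/complex_realP; exists (M i j).
Qed.

Lemma conj_tf n (A : 'M[R]_n) (B : 'cV[R]_n) (C : 'rV[R]_n) s :
  (tf (cmx A) (cmx B) (cmx C) s)^* = tf (cmx A) (cmx B) (cmx C) s^*.
Proof.
have conj_entry (M : 'M[R[i]]_1) : (M 0 0)^* = (map_mx Num.conj M) 0 0 by rewrite mxE.
by rewrite /tf conj_entry !map_mxM map_invmx map_mxB map_scalar_mx !conj_cmx.
Qed.

Lemma tf_diag m (d : 'rV[R[i]]_m) (b : 'cV_m) s :
  (forall i, s - d 0 i != 0) ->
  tf (diag_mx d) b (const_mx 1) s = \sum_i b i 0 / (s - d 0 i).
Proof.
move=> sd; rewrite /tf -diag_const_mx -raddfB invmx_diag => [|i]; last by rewrite !mxE.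
rewrite mxE; apply: eq_bigr => i _.
by rewrite mul_mx_diag !mxE mul1r mulrC.
Qed.

Lemma lyapunov_diag_entry m (d : 'rV[R[i]]_m) (P : 'M[R[i]]_m) (b : 'cV_m) i j :
  diag_mx d *m P + P *m ctrmx (diag_mx d) + b *m ctrmx b = 0 ->
  d 0 i + (d 0 j)^* != 0 ->
  P i j = - (b i 0 * (b j 0)^*) / (d 0 i + (d 0 j)^*).
Proof.
move=> /(congr1 (fun M : 'M[R[i]]_m => M i j)) lyap nz; apply: (mulIf nz); rewrite mulfVK //.
move: lyap; rewrite /ctrmx map_diag_mx tr_diag_mx mul_diag_mx mul_mx_diag !mxE big_ord1 !mxE.
by move=> /eqP; rewrite addr_eq0 => /eqP <-; rewrite mulrDr mulrC.
Qed.

Lemma const1_quad_form m (P : 'M[R[i]]_m) :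
  ((const_mx 1 : 'rV[R[i]]_m) *m P *m ctrmx (const_mx 1 : 'rV[R[i]]_m)) 0 0
    = \sum_i \sum_j P i j.
Proof.
rewrite mxE exchange_big; apply: eq_bigr => j _.
by rewrite !mxE rmorph1 mulr1; apply: eq_bigr => i _; rewrite mxE mul1r.
Qed.

Lemma tf_resolvent_quad_form n (A : 'M[R[i]]_n) (B : 'cV_n) (C : 'rV_n) s1 s2 :
  s1%:M - A \in unitmx -> s2%:M - A \in unitmx -> s1 != s2 ->
  let A2 := (s1%:M - A) *m (s2%:M - A) in
  let BB := B *m B^T in
  let u := (tf A B C s2 - tf A B C s1) / (s1 - s2) in
  (C *m invmx A2 *m (s1 * s2 *: BB + A *m BB *m A^T) *m (invmx A2)^T *m C^T) 0 0
    = s1 * s2 * u ^+ 2 + (s1 * u - tf A B C s2) ^+ 2.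
Proof.
move=> unit1 unit2 s1_neq_s2 A2 BB u.
set R1 := invmx (s1%:M - A); set R2 := invmx (s2%:M - A).
set U := C *m (R2 *m R1) *m B; set V := C *m (R2 *m R1) *m A *m B.
have U_u : U 0 0 = u.
  have d12 : s1 - s2 != 0 by rewrite subr_eq0.
  apply: (mulfI d12); rewrite /u [RHS]mulrC divfK //.
  transitivity (((s1 - s2) *: U) 0 0); first by rewrite [RHS]mxE.
  by rewrite /U scalemxAl scalemxAr resolvent_identity // mulmxBr mulmxBl /tf !mxE.
have V_u : V 0 0 = s1 * u - tf A B C s2.
  have R1A : R1 *m A = s1 *: R1 - 1%:M.
    by rewrite -[A](subKr s1%:M) mulmxBr mulVmx // mul_mx_scalar.
  have -> : V = s1 *: U - C *m R2 *m B.
    rewrite /V -(mulmxA C) -(mulmxA R2) R1A mulmxBr mulmxBr mulmxBl mulmx1.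
    by rewrite -!scalemxAr -scalemxAl.
  by rewrite -U_u /tf !mxE.
have quadE : C *m invmx A2 *m (s1 * s2 *: BB + A *m BB *m A^T) *m (invmx A2)^T *m C^T
    = (s1 * s2) *: (U *m U^T) + V *m V^T.
  rewrite /A2 invmxM // /U /V /BB !trmx_mul mulmxDr !mulmxDl -!scalemxAr -!scalemxAl.
  by rewrite !mulmxA.
by rewrite quadE -V_u -U_u !mxE !big_ord1 !mxE !expr2.
Qed.

End ComplexSystems.

Definition pole_residue2_h2norm2 (R : realType) (s1 s2 b1 b2 : R[i]) :=
  b1 * b1^* / (s1 + s1^*) + b1 * b2^* / (s1 + s2^*)
  + b2 * b1^* / (s2 + s1^*) + b2 * b2^* / (s2 + s2^*).

Lemma tf_pole_residue2 (R : realType) (s1 s2 b1 b2 s : R[i]) :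
  s + s1 != 0 -> s + s2 != 0 ->
  tf (diag_mx (\row_(j < 2) [:: - s1; - s2]`_j)) (\col_(j < 2) [:: b1; b2]`_j)
     (const_mx 1) s = pole_residue2 s1 s2 b1 b2 s.
Proof.
move=> ss1 ss2; rewrite tf_diag => [|i].
  by rewrite !big_ord_recr big_ord0 /= !mxE /= !opprK add0r.
by rewrite mxE; case: i => [[|[|]]] //= _; rewrite opprK.
Qed.

Section SecondOrderModel.
Variables (R : realType) (s1 s2 : R[i]).
Hypotheses (Re_s1 : 0 < complex.Re s1) (Re_s2 : 0 < complex.Re s2).

Let s11 : s1 + s1 != 0. Proof. exact: complexRe_gt0_addr_neq0. Qed.
Let s12 : s1 + s2 != 0. Proof. exact: complexRe_gt0_addr_neq0. Qed.
Let s22 : s2 + s2 != 0. Proof. exact: complexRe_gt0_addr_neq0. Qed.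

Lemma lyapunov_pole_residue2 (P : 'M[R[i]]_2) b1 b2 :
  let Am := diag_mx (\row_(j < 2) [:: - s1; - s2]`_j) in
  let Bm := \col_(j < 2) [:: b1; b2]`_j in
  Am *m P + P *m ctrmx Am + Bm *m ctrmx Bm = 0 ->
  ((const_mx 1 : 'rV_2) *m P *m ctrmx (const_mx 1 : 'rV_2)) 0 0
    = pole_residue2_h2norm2 s1 s2 b1 b2.
Proof.
move=> Am Bm lyap; rewrite const1_quad_form !big_ord_recl !big_ord0 !addr0.
rewrite !(lyapunov_diag_entry lyap) !mxE /= !rmorphN -!opprD;
  rewrite ?oppr_eq0 ?complexRe_gt0_addr_neq0 ?complexRe_conj //.
by rewrite /pole_residue2_h2norm2 !invrN !mulrNN !addrA.
Qed.

Lemma pole_residue2_h2norm2E (g : R[i] -> R[i]) b1 b2 :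
  s1 != s2 -> (forall s, (g s)^* = g s^*) ->
  (s1^* = s1 /\ s2^* = s2) \/ s2 = s1^* ->
  pole_residue2 s1 s2 b1 b2 s1 = g s1 -> pole_residue2 s1 s2 b1 b2 s2 = g s2 ->
  pole_residue2_h2norm2 s1 s2 b1 b2 = b1 * g s1 + b2 * g s2.
Proof.
move=> s1_neq_s2 g_real conj_closed g1 g2.
have conj_interp s : pole_residue2 s1 s2 b1 b2 s = g s ->
    pole_residue2 s1^* s2^* b1^* b2^* s^* = g s^*.
  by move=> e; rewrite -g_real -e rmorph_pole_residue2.
rewrite /pole_residue2_h2norm2 -g1 -g2 /pole_residue2.
case: conj_closed => [[r1 r2] | s2E].
  have [c1 c2] : b1^* = b1 /\ b2^* = b2.
    apply: (pole_residue2_interp_inj s11 s12 s22 s1_neq_s2).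
      by have c := conj_interp _ g1; rewrite r1 r2 in c; rewrite c g1.
    by have c := conj_interp _ g2; rewrite r1 r2 in c; rewrite c g2.
  by rewrite r1 r2 c1 c2; ring.
have s1E : s2^* = s1 by rewrite s2E conjCK.
have [c2 c1] : b2^* = b1 /\ b1^* = b2.
  apply: (pole_residue2_interp_inj s11 s12 s22 s1_neq_s2).
    have c := conj_interp _ g2; rewrite -s2E s1E pole_residue2C in c.
    by rewrite c g1.
  have c := conj_interp _ g1; rewrite -s2E s1E pole_residue2C in c.
  by rewrite c g2.
by rewrite -s2E s1E c1 c2; ring.
Qed.

End SecondOrderModel.

Theorem lemma5 (R : realType) (n : nat)
  (A : 'M[R]_n) (B : 'cV[R]_n) (C : 'rV[R]_n)
  (a1 a2 b1 b2 s1 s2 : R[i]) :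
  let Ac := cmx A in let Bc := cmx B in let Cc := cmx C in
  let Am : 'M[R[i]]_2 := diag_mx (\row_(j < 2) [:: a1; a2]`_j) in
  let Bm : 'cV[R[i]]_2 := \col_(j < 2) [:: b1; b2]`_j in
  let Cm : 'rV[R[i]]_2 := const_mx 1 in
  let G := tf Ac Bc Cc in
  let Gm := tf Am Bm Cm in
  (* G stable, G_m stable *)
  hurwitz Ac -> hurwitz Am ->
  (* interpolation points *)
  s1 = - a1 -> s2 = - a2 ->
  s1 != s2 ->
  ~ eigenvalue Ac s1 -> ~ eigenvalue Ac s2 ->
  ((Num.conj s1 = s1 /\ Num.conj s2 = s2) \/ s2 = Num.conj s1) ->
  (* first-order H2-optimality (Hermite interpolation) conditions *)
  Gm s1 = G s1 -> Gm s2 = G s2 ->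
  cderive Gm s1 = cderive G s1 -> cderive Gm s2 = cderive G s2 ->
  (* ||G_m||_H2^2 = C_m P_m C_m^H, P_m the controllability Gramian *)
  forall Pm : 'M[R[i]]_2,
    Am *m Pm + Pm *m ctrmx Am + Bm *m ctrmx Bm = 0 ->
  let A2 := (s1%:M - Ac) *m (s2%:M - Ac) in
  let BB := Bc *m Bc^T in
  (Cm *m Pm *m ctrmx Cm) 0 0 =
    2 * (s1 + s2) *
    (Cc *m invmx A2 *m (s1 * s2 *: BB + Ac *m BB *m Ac^T) *m (invmx A2)^T *m Cc^T) 0 0.
Proof.
move=> Ac Bc Cc Am Bm Cm G Gm _ hurwitz_Am /esym/(canRL opprK) a1E
  /esym/(canRL opprK) a2E s1_neq_s2 not_eig1 not_eig2 conj_closed interp1 interp2 _ _ Pm lyap A2 BB.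
subst a1 a2.
have Re_s1 : 0 < complex.Re s1.
  by have := hurwitz_Am _ (eigenvalue_diag _ 0); rewrite mxE /= complexReN oppr_lt0.
have Re_s2 : 0 < complex.Re s2.
  by have := hurwitz_Am _ (eigenvalue_diag _ 1); rewrite mxE /= complexReN oppr_lt0.
rewrite /Gm tf_pole_residue2 ?complexRe_gt0_addr_neq0 // in interp1.
rewrite /Gm tf_pole_residue2 ?complexRe_gt0_addr_neq0 // in interp2.
rewrite (lyapunov_pole_residue2 Re_s1 Re_s2 lyap).
rewrite (pole_residue2_h2norm2E Re_s1 Re_s2 s1_neq_s2 (conj_tf A B C) conj_closed interp1 interp2).
rewrite /A2 /BB tf_resolvent_quad_form ?unitmx_sub_scalar // -/G -interp1 -interp2.
by apply: (pole_residue2_h2_identity _ _ _ s1_neq_s2); apply: complexRe_gt0_addr_neq0.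
Qed.
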